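(* Let $a,b\ge 2$ be integers and let $G=\mathrm{Sym}(a)\wr\mathrm{Sym}(b)$ with its imprimitive action on $ab$ points. Then \[ \mathbf{m}(G)=\begin{cases} a+b-2 & \text{if } a=3 \text{ and } b \text{ is odd, or } b=3 \text{ and } a \text{ is odd},\\ a+b-1 & \text{otherwise.}\end{cases} \] In particular, if $G$ is a transitive imprimitive permutation group with a block system consisting of $b$ blocks each containing $a$ points, then $\mathbf{m}(G)\le a+b-1$.
   Context: The imprimitive action of $\mathrm{Sym}(a)\wr\mathrm{Sym}(b)$ is on $[a]\times[b]$, with the base group $\mathrm{Sym}(a)^b$ acting coordinatewise within the blocks $[a]\times\{j\}$ and $\mathrm{Sym}(b)$ permuting the blocks. For a transitive permutation group $X$ on a finite set $\Omega$ with $|\Omega|\ge2$, a subset $A\subseteq\Omega$ is self-separable for $X$ if there exists $x\in X$ with $A\cap A^x=\emptyset$; $\mathbf{m}(X)$ is the minimum cardinality of a subset of $\Omega$ that is not self-separable for $X$. *)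

From mathcomp Require Import all_boot all_fingroup.
Set Implicit Arguments. Unset Strict Implicit. Unset Printing Implicit Defensive.
Local Open Scope group_scope.

Definition self_separable (T : finType) (X : {set {perm T}}) (A : {set T}) : bool :=
  [exists x in X, A :&: [set x y | y in A] == set0].

(* m(X): minimum cardinality of a subset that is not self-separable.
   (The default #|T| is attained by setT, which is never self-separable
   when T is nonempty.) *)
Definition mX (T : finType) (X : {set {perm T}}) : nat :=
  \big[minn/#|T|]_(A : {set T} | ~~ self_separable X A) #|A|.

Definition wreath_imprim (a b : nat) : {set {perm ('I_a * 'I_b)}} :=
  [set p : {perm ('I_a * 'I_b)} |
     [exists f : {ffun 'I_b -> {perm 'I_a}}, exists s : {perm 'I_b},
        [forall x : 'I_a * 'I_b, p x == (f x.2 x.1, s x.2)]]].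

Definition block_system (T : finType) (G : {set {perm T}}) (P : {set {set T}})
  (a b : nat) : Prop :=
  [/\ partition P [set: T], #|P| = b, (forall B, B \in P -> #|B| = a)
    & (forall g B, g \in G -> B \in P -> [set g y | y in B] \in P)].

(* A set A of points of [a] x [b] with column sizes c_j is self-separable for
   Sym(a) wr Sym(b) iff some permutation s of the columns has c_j + c_(s j) <= a
   for every j.  Pairing the i-th largest column with the i-th smallest finds such
   an s unless, for some x + y > a, the columns of size >= x and those of size
   >= y number more than b in total; summing A over these two layers then gives
   |A| >= a + b - 1, and only |A| >= a + b - 2 in the exceptional cases, where
   the (a/2 + 1) x (b/2 + 1) rectangle is the extremal configuration.  A full
   column plus a full row, and in the exceptional cases that rectangle, are not
   self-separable.  For an arbitrary block system, a block together with a
   transversal of the blocks meets each of its images. *)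

From mathcomp Require Import all_boot all_fingroup.
From mathcomp Require Import zify.

Set Implicit Arguments.
Unset Strict Implicit.
Unset Printing Implicit Defensive.

Lemma mX_le_card (T : finType) (X : {set {perm T}}) (A : {set T}) :
  ~~ self_separable X A -> mX X <= #|A|.
Proof.
rewrite /mX => nsepA; have : A \in index_enum {set T} by rewrite mem_index_enum.
elim: (index_enum _) => // B r IHr; rewrite inE big_cons.
case/orP => [/eqP <- | /IHr]; first by rewrite nsepA geq_minl.
by case: ifP => // _ le_r_A; rewrite geq_min le_r_A orbT.
Qed.

Lemma mX_ge (T : finType) (X : {set {perm T}}) (n : nat) :
  n <= #|T| -> (forall A : {set T}, #|A| < n -> self_separable X A) -> n <= mX X.
Proof.
move=> le_n_T sepX; apply: (big_ind (fun m => n <= m)) => // [u v|A nsepA].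
  by rewrite leq_min => -> ->.
by rewrite leqNgt; apply: contra nsepA => /sepX.
Qed.

Lemma mX_block_system_le (T : finType) (G : {set {perm T}}) (P : {set {set T}}) (a b : nat) :
  0 < b -> block_system G P a b -> mX G <= a + b - 1.
Proof.
move=> b_gt0 [partP cardP cardB blockG].
have /card_gt0P[B0 PB0] : 0 < #|P| by rewrite cardP.
have trX := transversalP partP; set X := transversal P [set: T] in trX *.
have meetX B : B \in P -> #|X :&: B| = 1.
  by case/and3P: trX => _ _ /forall_inP meet1 /meet1/eqP.
apply: (leq_trans (mX_le_card (A := B0 :|: X) _)).
  apply/existsP => -[g /andP[Gg /eqP disj]].
  have /card_gt0P[r] : 0 < #|X :&: [set g x | x in B0]| by rewrite meetX ?blockG.
  rewrite inE => /andP[Xr gB0r].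
  have : r \in (B0 :|: X) :&: [set g x | x in B0 :|: X].
    by rewrite !inE Xr orbT (subsetP (imsetS _ (subsetUl B0 X))).
  by rewrite disj inE.
have := cardsU B0 X; rewrite (setIC B0) meetX // (cardB B0) // (card_transversal trX) cardP; lia.
Qed.

Lemma meet_of_card_gt (T : finType) (A B : {set T}) :
  #|T| < #|A| + #|B| -> exists2 x, x \in A & x \in B.
Proof.
move=> lt_T_AB; case: (set_0Vmem (A :&: B)) => [AB0 | [x]]; last first.
  by rewrite inE => /andP[]; exists x.
have /leqifP := leq_card_setU A B; rewrite -setI_eq0 AB0 eqxx => /eqP eq_AB.
by move: (max_card (A :|: B)); rewrite eq_AB leqNgt lt_T_AB.
Qed.

Definition relabel (T : eqType) (u w : seq T) (x : T) : T := nth x w (index x u).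

Lemma relabel_inj (T : eqType) (u w : seq T) :
  (forall x, x \in u) -> uniq w -> size u <= size w -> injective (relabel u w).
Proof.
move=> u_full uniq_w le_uw x y; rewrite /relabel.
have lt_w z : index z u < size w by rewrite (leq_trans _ le_uw) ?index_mem.
rewrite (set_nth_default x y (lt_w y)) => /eqP; rewrite nth_uniq // => /eqP.
by apply: (index_inj x).
Qed.

Lemma exists_perm_avoid (T : finType) (U V : {set T}) :
  #|U| + #|V| <= #|T| -> exists f : {perm T}, forall x, x \in U -> f x \notin V.
Proof.
move=> le_UV_T; pose u := enum U ++ enum (~: U); pose w := enum (~: V) ++ enum V.
have u_full x : x \in u by rewrite mem_cat !mem_enum inE orbN.
have uniq_w : uniq w.
  rewrite cat_uniq !enum_uniq andbT /=; apply/hasPn => x.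
  by rewrite !mem_enum inE => ->.
have size_w : size w = #|T| by rewrite size_cat -!cardE addnC cardsC.
have size_u : size u = #|T| by rewrite size_cat -!cardE cardsC.
exists (perm (relabel_inj u_full uniq_w (eq_leq (etrans size_u (esym size_w))))).
move=> x Ux; rewrite permE /relabel index_cat mem_enum Ux nth_cat.
have lt_x : index x (enum U) < size (enum (~: V)).
  have := cardsC V; have : index x (enum U) < #|U| by rewrite cardE index_mem mem_enum.
  rewrite -cardE; lia.
rewrite lt_x; set y := nth _ _ _.
have : y \in enum (~: V) by rewrite mem_nth.
by rewrite mem_enum inE.
Qed.

Lemma card_ge_nth_sorted (I : finType) (c : I -> nat) (e : seq I) (x0 : I) (p : nat) :
  sorted (fun i j => c j <= c i) e -> uniq e -> p < size e ->
  p.+1 <= #|[set k | c (nth x0 e p) <= c k]|.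
Proof.
move=> sorted_e uniq_e lt_p_e; rewrite cardE.
have <- : size (take p.+1 e) = p.+1 by rewrite size_takel.
apply: uniq_leq_size; first by rewrite take_uniq.
move=> y y_take; rewrite mem_enum inE.
have lt_y : index y (take p.+1 e) < p.+1.
  by rewrite -[X in _ < X](size_takel lt_p_e) index_mem.
rewrite -(nth_index x0 y_take) nth_take //.
have leT_trans : transitive (fun i j => c j <= c i).
  by move=> j i k le_ji le_kj; apply: leq_trans le_kj le_ji.
apply: (sorted_leq_nth leT_trans (fun i => leqnn (c i)) x0 sorted_e) => //.
by rewrite inE (leq_trans lt_y).
Qed.

Lemma exists_perm_add_le (I : finType) (c : I -> nat) (a : nat) :
  (forall x y, a < x + y -> #|[set i | x <= c i]| + #|[set i | y <= c i]| <= #|I|) ->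
  exists s : {perm I}, forall i, c i + c (s i) <= a.
Proof.
move=> count_le.
pose e := sort (fun i j => c j <= c i) (enum I).
have e_full i : i \in e by rewrite mem_sort mem_enum.
have uniq_e : uniq e by rewrite sort_uniq enum_uniq.
have size_e : size e = #|I| by rewrite size_sort cardE.
have sorted_e : sorted (fun i j => c j <= c i) e.
  by apply: sort_sorted => i j; apply: leq_total.
have s_inj : injective (relabel e (rev e)).
  by apply: relabel_inj; rewrite ?rev_uniq ?size_rev.
exists (perm s_inj) => i; rewrite permE /relabel leqNgt; apply/negP => /count_le.
have lt_p : index i e < size e by rewrite index_mem.
have lt_q : size e - (index i e).+1 < size e by lia.
rewrite nth_rev // -{1}(nth_index i (e_full i)).
have := card_ge_nth_sorted i sorted_e uniq_e lt_p.
have := card_ge_nth_sorted i sorted_e uniq_e lt_q.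
set X := #|[set k | c (nth i e (size e - _)) <= c k]|.
set Y := #|[set k | c (nth i e (index i e)) <= c k]|.
lia.
Qed.

Definition exceptional (a b : nat) : bool := ((a == 3) && odd b) || ((b == 3) && odd a).

Definition m_wreath (a b : nat) : nat := if exceptional a b then a + b - 2 else a + b - 1.

Lemma sum_ge_layers (I : finType) (c : I -> nat) (x y : nat) : y <= x ->
  y * #|[set i | y <= c i]| + (x - y) * #|[set i | x <= c i]| <= \sum_i c i.
Proof.
move=> le_yx; rewrite -!sum1dep_card !big_distrr !(big_mkcond (fun i => _ <= _)) -big_split.
by apply: leq_sum => i _; case: (leqP y (c i)); case: (leqP x (c i)) => /=; lia.
Qed.

Lemma m_wreath_le_layers (a b x y p q : nat) : 2 <= a -> 2 <= b ->
  y <= x <= a -> a < x + y -> p <= q <= b -> b < p + q ->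
  m_wreath a b <= y * q + (x - y) * p.
Proof.
move=> a_ge2 b_ge2 /andP[le_yx le_xa] lt_a_xy /andP[le_pq le_qb] lt_b_pq.
have [d def_q] : exists d, q = p + d by exists (q - p); rewrite subnKC.
rewrite {q le_pq}def_q in le_qb lt_b_pq *.
rewrite mulnDr addnAC -mulnDl subnKC //.
case: d => [|d] in le_qb lt_b_pq *.
  have ea := odd_double_half a; have eb := odd_double_half b.
  have : (a./2 + 1) * (b./2 + 1) <= x * p by apply: leq_mul; lia.
  rewrite muln0 addn0 /m_wreath /exceptional.
  by case: ifP; case: (odd a) ea; case: (odd b) eb => //=; nia.
have [p' def_p] : exists p', p = p'.+1 by exists p.-1; lia.
have x_ge2 : 2 <= x by lia.
have y_ge1 : 1 <= y by lia.
have := leq_mul x_ge2 (leqnn p'); have := leq_mul (leqnn d) y_ge1.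
rewrite /m_wreath def_p; case: ifP => _; nia.
Qed.

Definition column (a b : nat) (A : {set 'I_a * 'I_b}) (j : 'I_b) : {set 'I_a} :=
  [set i | (i, j) \in A].

Lemma card_columns (a b : nat) (A : {set 'I_a * 'I_b}) : #|A| = \sum_j #|column A j|.
Proof.
rewrite -sum1_card big_mkcond /=.
under [RHS]eq_bigr do rewrite -sum1dep_card big_mkcond /=.
by rewrite exchange_big pair_bigA; apply: eq_bigr => -[i j].
Qed.

Lemma self_separable_wreathP (a b : nat) (A : {set 'I_a * 'I_b}) :
  reflect (exists s : {perm 'I_b}, forall j, #|column A j| + #|column A (s j)| <= a)
          (self_separable (wreath_imprim a b) A).
Proof.
apply: (iffP existsP) => [[p /andP[]] | [s col_le]].
  rewrite inE => /existsP[f /existsP[s /forallP def_p]] /eqP disjA.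
  exists s => j; rewrite leqNgt; apply/negP.
  rewrite -(card_imset (column A j) (@perm_inj _ (f j))) -[X in X < _](card_ord a).
  case/meet_of_card_gt => _ /imsetP[i + ->]; rewrite !inE => Aij Afij.
  have : (f j i, s j) \in A :&: [set p y | y in A].
    by rewrite inE Afij -(eqP (def_p (i, j))) imset_f.
  by rewrite disjA inE.
have /fin_all_exists[f f_avoid] j :
    exists g : {perm 'I_a}, forall i, i \in column A j -> g i \notin column A (s j).
  by apply: exists_perm_avoid; rewrite card_ord.
pose g (x : 'I_a * 'I_b) := (f x.2 x.1, s x.2).
have g_inj : injective g by move=> [i j] [i' j'] [] /[swap] /perm_inj <- /perm_inj ->.
exists (perm g_inj); apply/andP; split.
  rewrite inE; apply/existsP; exists [ffun j => f j]; apply/existsP; exists s.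
  by apply/forallP => x; rewrite permE ffunE.
apply/eqP/setP => x; rewrite !inE; apply/negP => /andP[Ax /imsetP[[i j] Aij def_x]].
have /f_avoid : i \in column A j by rewrite inE.
by rewrite inE; move: Ax; rewrite def_x permE => ->.
Qed.

Lemma card_ord_lt (n h : nat) : h <= n -> #|[set i : 'I_n | i < h]| = h.
Proof. by move=> le_hn; rewrite -sum1dep_card (big_ord_narrow le_hn) sum1_card card_ord. Qed.

Lemma card_column_le (a b : nat) (A : {set 'I_a * 'I_b}) (j : 'I_b) : #|column A j| <= a.
Proof. by rewrite -[a in _ <= a]card_ord max_card. Qed.

Lemma self_separable_wreath_small (a b : nat) (A : {set 'I_a * 'I_b}) :
  2 <= a -> 2 <= b -> #|A| < m_wreath a b -> self_separable (wreath_imprim a b) A.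
Proof.
move=> a_ge2 b_ge2 small_A; apply/self_separable_wreathP.
apply: exists_perm_add_le => x y lt_a_xy; rewrite leqNgt card_ord.
apply: contraL small_A => lt_b_pq; rewrite -leqNgt.
wlog le_yx : x y lt_a_xy lt_b_pq / y <= x.
  by move=> sym; case: (leqP y x) => [|/ltnW]; [apply: sym | apply: sym; lia].
set p := #|[set j | x <= #|column A j|]|; set q := #|[set j | y <= #|column A j|]|.
have {}lt_b_pq : b < p + q := lt_b_pq.
have le_pq : p <= q.
  by apply/subset_leq_card/subsetP => j; rewrite !inE; apply: leq_trans.
have le_qb : q <= b by rewrite -[b in _ <= b]card_ord max_card.
have le_xa : x <= a.
  have /card_gt0P[j] : 0 < p by lia.
  by rewrite inE => /leq_trans; apply; apply: card_column_le.
rewrite card_columns (leq_trans _ (sum_ge_layers _ le_yx)) //.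
by apply: m_wreath_le_layers; rewrite ?le_yx ?le_pq.
Qed.

Lemma mX_wreath_le_cross (a b : nat) : 0 < a -> 0 < b ->
  mX (wreath_imprim a b) <= a + b - 1.
Proof.
move=> a_gt0 b_gt0; pose i0 : 'I_a := Ordinal a_gt0; pose j0 : 'I_b := Ordinal b_gt0.
pose A := setX [set: 'I_a] [set j0] :|: setX [set i0] [set: 'I_b].
apply: (leq_trans (mX_le_card (A := A) _)).
  apply/self_separable_wreathP => -[s col_le].
  have full_j0 : column A j0 = [set: 'I_a] by apply/setP => i; rewrite !inE eqxx.
  have := col_le j0; rewrite full_j0 cardsT card_ord -[X in _ <= X]addn0 leq_add2l.
  by rewrite leqn0 cards_eq0 => /eqP/setP/(_ i0); rewrite !inE eqxx orbT.
have : 0 < #|setX [set: 'I_a] [set j0] :&: setX [set i0] [set: 'I_b]|.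
  by apply/card_gt0P; exists (i0, j0); rewrite !inE !eqxx.
by have := cardsU (setX [set: 'I_a] [set j0]) (setX [set i0] [set: 'I_b]);
  rewrite /A !cardsX !cardsT !cards1 !card_ord; lia.
Qed.

Lemma mX_wreath_le_rectangle (a b h m : nat) : h <= a -> m <= b -> a < h + h -> b < m + m ->
  mX (wreath_imprim a b) <= h * m.
Proof.
move=> le_ha le_mb lt_a_hh lt_b_mm.
pose H := [set i : 'I_a | i < h]; pose M := [set j : 'I_b | j < m].
have col_rect j : j \in M -> column (setX H M) j = H.
  by rewrite inE => lt_jm; apply/setP => i; rewrite !inE /= lt_jm andbT.
apply: (leq_trans (mX_le_card (A := setX H M) _)); last by rewrite cardsX !card_ord_lt.
apply/self_separable_wreathP => -[s col_le].
have [_ /imsetP[j Mj ->] Msj] : exists2 j', j' \in s @: M & j' \in M.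
  by apply: meet_of_card_gt; rewrite card_imset ?card_ord ?card_ord_lt //; apply: perm_inj.
by have := col_le j; rewrite !col_rect // card_ord_lt //; lia.
Qed.

Lemma mX_wreath_ge (a b : nat) : 2 <= a -> 2 <= b -> m_wreath a b <= mX (wreath_imprim a b).
Proof.
move=> a_ge2 b_ge2; apply: mX_ge => [|A]; last exact: self_separable_wreath_small.
by rewrite card_prod !card_ord /m_wreath; case: ifP => _; nia.
Qed.

Lemma mX_wreath_le (a b : nat) : 2 <= a -> 2 <= b -> mX (wreath_imprim a b) <= m_wreath a b.
Proof.
move=> a_ge2 b_ge2; rewrite /m_wreath; case: ifP => [exc | _]; last first.
  by apply: mX_wreath_le_cross; lia.
have ea := odd_double_half a; have eb := odd_double_half b.
apply: (leq_trans (mX_wreath_le_rectangle (h := a./2.+1) (m := b./2.+1) _ _ _ _)); try lia.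
by case/orP: exc => /andP[/eqP -> odd_b]; move: odd_b ea eb => /= ->; lia.
Qed.

Theorem theoremE (a b : nat) : 2 <= a -> 2 <= b ->
  mX (wreath_imprim a b) =
    (if ((a == 3) && odd b) || ((b == 3) && odd a) then a + b - 2 else a + b - 1)
  /\
  (forall (T : finType) (G : {group {perm T}}) (P : {set {set T}}),
     [transitive G, on [set: T] | 'P] ->
     block_system G P a b ->
     mX G <= a + b - 1).
Proof.
move=> a_ge2 b_ge2; split.
  change (mX (wreath_imprim a b) = m_wreath a b).
  by apply/eqP; rewrite eqn_leq mX_wreath_le ?mX_wreath_ge.
(* The bound holds for any block system. *)
move=> T G P _; apply: mX_block_system_le; lia.
Qed.
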